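(* Let $I$ be a proper ideal in $\mathbb{B}_n$, let $Z=(z_1,\dots,z_s)$ be a tuple of distinct Boolean indeterminates, let $m=n-s$, and let $\mathbb{B}_m\subseteq\mathbb{B}_n$ be the subring $\mathbb{F}_2[X\setminus Z]$ generated by the Boolean indeterminates not in $Z$. Assume $F=(f_1,\dots,f_s)$ is a coherently $Z$-separating tuple of Boolean polynomials in $I$ with respect to a term ordering $\sigma$ (i.e. $\operatorname{LT}_\sigma(f_i)=z_i$), and write $f_i=z_i-h_i$ with $h_i\in\mathbb{B}_m$. (a) The reduced Boolean $\sigma$-Gröbner basis of $I$ has the form $\{z_1-\tilde h_1,\dots,z_s-\tilde h_s,g_1,\dots,g_r\}$ with $\tilde h_1,\dots,\tilde h_s,g_1,\dots,g_r\in\mathbb{B}_m$. (b) The $\mathbb{F}_2$-algebra homomorphism $\Phi:\mathbb{B}_n/I\to\mathbb{B}_m/(I\cap\mathbb{B}_m)$ given by $\Phi(x_i+I)=x_i+(I\cap\mathbb{B}_m)$ for $x_i\notin Z$ and $\Phi(x_i+I)=h_j+(I\cap\mathbb{B}_m)$ for $x_i=z_j\in Z$ is well defined and is an isomorphism of $\mathbb{F}_2$-algebras. (c) For every elimination ordering $\tau$ for $Z$, we have $\langle z_1,\dots,z_s\rangle\subseteq\operatorname{LT}_\tau(I)$.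
   Context: $P=\mathbb{F}_2[X_1,\dots,X_n]$, $\mathbb{I}_n=\langle X_1^2-X_1,\dots,X_n^2-X_n\rangle$, $\mathbb{B}_n=P/\mathbb{I}_n$, $x_i=X_i+\mathbb{I}_n$, $X=(x_1,\dots,x_n)$. Every $f\in\mathbb{B}_n$ has a unique representative $F\in P$ that is a sum of square-free terms (canonical representative); $\operatorname{Supp}(f)=\{t+\mathbb{I}_n: t\in\operatorname{Supp}(F)\}$; for a term ordering $\sigma$ on $P$, $\operatorname{LT}_\sigma(f)=\operatorname{LT}_\sigma(F)+\mathbb{I}_n$ and $\operatorname{LT}_\sigma(I)=\langle\operatorname{LT}_\sigma(f): f\in I\rangle$. A Boolean $\sigma$-Gröbner basis of $I$ is a finite $G\subseteq I$ with $\langle\operatorname{LT}_\sigma(g):g\in G\rangle=\operatorname{LT}_\sigma(I)$; it is reduced if it is minimal, and for each $g\in G$ no term of $\operatorname{Supp}(g)$ other than $\operatorname{LT}_\sigma(g)$ lies in $\operatorname{LT}_\sigma(I)$ (over $\mathbb{F}_2$ all elements are monic). A tuple $(f_1,\dots,f_s)$ of Boolean polynomials in $I$ is $Z$-separating if there is a term ordering $\sigma$ with $\operatorname{LT}_\sigma(f_i)=z_i$ for all $i$; it is coherently $Z$-separating if moreover, for all $i\ne j$, no term in $\operatorname{Supp}(f_i)$ is divisible by $z_j$. An elimination ordering for $Z$ is a term ordering in which every term divisible by some $z_i$ is larger than every term not divisible by any $z_i$. *)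

(* Boolean polynomials in B_n = F_2[x_1..x_n]/<x_i^2-x_i>
   are represented by their support (= set of square-free terms of the
   canonical representative); a square-free term is the set of its
   indeterminates. *)
From mathcomp Require Import all_boot.
Set Implicit Arguments. Unset Strict Implicit. Unset Printing Implicit Defensive.

Section Boolean.
Variable n : nat.

Definition bterm := {set 'I_n}.
Definition bpoly := {set bterm}.

Definition bzero : bpoly := set0.
Definition bone : bpoly := [set set0].
Definition bvar (i : 'I_n) : bpoly := [set [set i]].
(* addition over F_2 = symmetric difference of supports (also subtraction) *)
Definition badd (f g : bpoly) : bpoly := (f :\: g) :|: (g :\: f).
(* multiplication: x_i^2 = x_i, so term product is union; the coefficient
   of w is the parity of the number of pairs of terms with product w *)
Definition bmul (f g : bpoly) : bpoly :=
  [set w : bterm | odd #|[set p : bterm * bterm |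
        [&& p.1 \in f, p.2 \in g & p.1 :|: p.2 == w]]|].

Definition bsubst (a : 'I_n -> bpoly) (f : bpoly) : bpoly :=
  foldr badd bzero
    [seq foldr bmul bone [seq a i | i : 'I_n <- enum t] | t : bterm <- enum f].

Definition is_ideal (I : {set bpoly}) : Prop :=
  [/\ bzero \in I,
      (forall f g, f \in I -> g \in I -> badd f g \in I) &
      (forall f g, g \in I -> bmul f g \in I)].

Definition proper_ideal (I : {set bpoly}) : Prop := is_ideal I /\ bone \notin I.

Definition in_gen (S : {set bpoly}) (f : bpoly) : Prop :=
  forall J : {set bpoly}, is_ideal J -> S \subset J -> f \in J.

(* terms of P = F_2[X_1..X_n] as exponent vectors *)
Definition expv := {ffun 'I_n -> nat}.
Definition ev0 : expv := [ffun => 0%N].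
Definition evadd (a b : expv) : expv := [ffun i => (a i + b i)%N].
Definition ev (t : bterm) : expv := [ffun i => nat_of_bool (i \in t)].

Definition is_term_ordering (le : rel expv) : Prop :=
  [/\ reflexive le, antisymmetric le, transitive le & total le] /\
  (forall a b c, le a b -> le (evadd a c) (evadd b c)) /\
  (forall a, le ev0 a).

Definition isLT (le : rel expv) (f : bpoly) (t : bterm) : bool :=
  (t \in f) && [forall u in f, le (ev u) (ev t)].

Definition LTs (le : rel expv) (S : {set bpoly}) : {set bpoly} :=
  [set [set t] | t in [set t : bterm | [exists f in S, isLT le f t]]].

Definition inLT (le : rel expv) (I : {set bpoly}) (g : bpoly) : Prop :=
  in_gen (LTs le I) g.

Definition is_GB (le : rel expv) (I G : {set bpoly}) : Prop :=
  [/\ G \subset I, bzero \notin G &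
      forall g, in_gen (LTs le G) g <-> inLT le I g].

Definition is_reduced_GB (le : rel expv) (I G : {set bpoly}) : Prop :=
  [/\ is_GB le I G,
      (forall g t, g \in G -> isLT le g t -> ~ in_gen (LTs le (G :\ g)) [set t]) &
      (forall g t u, g \in G -> isLT le g t -> u \in g -> u != t ->
          ~ inLT le I [set u])].

Definition inBm (s : nat) (z : 'I_s -> 'I_n) (f : bpoly) : bool :=
  [forall t in f, [forall j, z j \notin t]].

Definition coh_Z_sep (le : rel expv) (I : {set bpoly}) (s : nat)
  (z : 'I_s -> 'I_n) (f : 'I_s -> bpoly) : Prop :=
  [/\ forall i, f i \in I,
      forall i, isLT le (f i) [set z i] &
      forall i j, i != j -> forall t, t \in f i -> z j \notin t].

Definition is_elim_ordering (s : nat) (z : 'I_s -> 'I_n) (le : rel expv) : Prop :=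
  is_term_ordering le /\
  forall a b : expv, (exists j, (0 < a (z j))%N) -> (forall j, b (z j) = 0%N) ->
    le b a && (a != b).

Definition Phi_images (s : nat) (z : 'I_s -> 'I_n) (h : 'I_s -> bpoly)
  (i : 'I_n) : bpoly :=
  match [pick j | z j == i] with Some j => h j | None => bvar i end.

End Boolean.

(** A Boolean polynomial is determined by the function it defines on F_2^n,
    so every algebraic identity in B_n can be checked pointwise.  Since
    f_i = z_i - h_i lies in I, each z_i is congruent to h_i modulo I, and
    substituting h_j for z_j is the identity modulo I; its image lies in
    B_m, which gives (b).  For (a), z_i in LT(I) forces some element of the
    reduced basis to have leading term exactly z_i (a leading term 1 would
    put 1 in I); minimality leaves exactly one such element for each z_i and
    no other element whose leading term involves Z, and reducedness keeps Z
    out of all non-leading terms, since every term divisible by some z_k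
    lies in LT(I).  For (c), h_j has no term involving Z, so an elimination
    ordering ranks z_j above every term of h_j. *)
From mathcomp Require Import all_boot.
Set Implicit Arguments. Unset Strict Implicit. Unset Printing Implicit Defensive.

Section BooleanPolynomials.
Variable n : nat.
Implicit Types (f g p q : bpoly n) (t u w x : bterm n) (I S G : {set bpoly n}).

(* A point of F_2^n is given by its support x. *)
Definition beval f x : bool :=
  \big[addb/false]_(t : bterm n) ((t \in f) && (t \subset x)).

Lemma in_badd f g t : (t \in badd f g) = (t \in f) (+) (t \in g).
Proof. by rewrite !inE; case: (t \in f); case: (t \in g). Qed.

Lemma odd_card_addb (A : {set bterm n * bterm n}) :
  odd #|A| = \big[addb/false]_(pr : bterm n * bterm n) (pr \in A).
Proof.
rewrite -sum1_card (big_morph odd oddD (erefl (odd 0))) big_mkcond /=.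
by apply: eq_bigr => pr _; case: (pr \in A).
Qed.

Lemma beval_add f g x : beval (badd f g) x = beval f x (+) beval g x.
Proof.
rewrite /beval -big_split /=; apply: eq_bigr => t _.
by rewrite in_badd; case: (t \in f); case: (t \in g); case: (t \subset x).
Qed.

Lemma beval_mul f g x : beval (bmul f g) x = beval f x && beval g x.
Proof.
rewrite /beval /bmul.
under eq_bigr => w _ do rewrite inE odd_card_addb andbC big_distrr.
rewrite exchange_big [RHS]big_distrlr [RHS]pair_big /=; apply: eq_bigr => pr _.
rewrite (bigD1 (pr.1 :|: pr.2)) //= big1 ?addbF => [|w /negbTE wN].
  rewrite inE eqxx andbT subUset.
  by case: (pr.1 \in f); case: (pr.2 \in g); case: (pr.1 \subset x); case: (pr.2 \subset x).
by rewrite inE; case: eqP => [E|]; [rewrite E eqxx in wN | rewrite !andbF].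
Qed.

Lemma beval_monomial t x : beval [set t] x = (t \subset x).
Proof.
rewrite /beval (bigD1 t) ?inE ?eqxx //= big1 ?addbF // => u /negbTE.
by rewrite inE => ->.
Qed.

Lemma beval0 x : beval (bzero n) x = false.
Proof. by rewrite /beval big1 // => t _; rewrite inE. Qed.

Lemma beval1 x : beval (bone n) x = true.
Proof. by rewrite beval_monomial sub0set. Qed.

Lemma beval_var i x : beval (bvar i) x = (i \in x).
Proof. by rewrite beval_monomial sub1set. Qed.

(* A nonzero f does not vanish at the support of a term of f of minimal size. *)
Lemma beval_inj f g : beval f =1 beval g -> f = g.
Proof.
move=> Efg; suff /setP dfg0 : badd f g = set0.
  by apply/setP => t; move: (dfg0 t); rewrite in_badd inE; do 2!case: (_ \in _).
apply/eqP; apply: contraT => /set0Pn [t0 /(arg_minnP (fun t => #|t|)) [t tfg tmin]].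
have : beval (badd f g) t = false by rewrite beval_add Efg addbb.
have {}tfg : t \in badd f g := tfg.
rewrite /beval (bigD1 t) //= tfg subxx big1 // => u ut.
apply/negbTE/andP => -[/tmin le_tu ut_sub].
by move: ut; rewrite eqEcard ut_sub le_tu.
Qed.

Lemma baddC p q : badd p q = badd q p.
Proof. by apply: beval_inj => x; rewrite !beval_add addbC. Qed.

Lemma baddK p q : badd p (badd p q) = q.
Proof. by apply: beval_inj => x; rewrite !beval_add addKb. Qed.

Lemma baddxx p : badd p p = bzero n.
Proof. by apply: beval_inj => x; rewrite beval_add beval0 addbb. Qed.

Lemma beval_bsubst a p x : beval (bsubst a p) x = beval p [set i | beval (a i) x].
Proof.
have beval_prod l : beval (foldr (@bmul n) (bone n) l) x = all (beval^~ x) l.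
  by elim: l => [|q l IH] /=; rewrite ?beval1 // beval_mul IH.
have beval_sum l :
    beval (foldr (@badd n) (bzero n) l) x = foldr addb false (map (beval^~ x) l).
  by elim: l => [|q l IH] /=; rewrite ?beval0 // beval_add IH.
rewrite /bsubst beval_sum -map_comp foldrE big_map big_enum [RHS]/beval big_mkcond /=.
apply: eq_bigr => t _; rewrite beval_prod all_map; case: (t \in p) => //=.
apply/allP/subsetP => [H i ti | H i]; last by rewrite mem_enum => /H; rewrite inE.
by rewrite inE; apply: H; rewrite mem_enum.
Qed.

Lemma bsubst_var p : bsubst (@bvar n) p = p.
Proof.
apply: beval_inj => x; rewrite beval_bsubst; congr beval.
by apply/setP => i; rewrite inE beval_var.
Qed.

Lemma bsubst_add a p q : bsubst a (badd p q) = badd (bsubst a p) (bsubst a q).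
Proof. by apply: beval_inj => x; rewrite beval_add !beval_bsubst beval_add. Qed.

Lemma bsubst_mul a p q : bsubst a (bmul p q) = bmul (bsubst a p) (bsubst a q).
Proof. by apply: beval_inj => x; rewrite beval_mul !beval_bsubst beval_mul. Qed.

Lemma bsubst_one a : bsubst a (bone n) = bone n.
Proof. by apply: beval_inj => x; rewrite beval_bsubst !beval1. Qed.

Lemma in_bmulP p q w :
  w \in bmul p q -> exists a b, [/\ a \in p, b \in q & w = a :|: b].
Proof.
rewrite inE => /odd_gt0; rewrite card_gt0 => /set0Pn [[a b]].
by rewrite inE /= => /and3P [ap bq /eqP <-]; exists a, b.
Qed.

Section Ideal.
Variable I : {set bpoly n}.
Hypothesis idealI : is_ideal I.

Lemma ideal0 : bzero n \in I.
Proof. by case: idealI. Qed.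

Lemma ideal_add p q : p \in I -> q \in I -> badd p q \in I.
Proof. by case: idealI => _ + _; apply. Qed.

Lemma ideal_mul p q : q \in I -> bmul p q \in I.
Proof. by case: idealI => _ _; apply. Qed.

Lemma congr_refl p : badd p p \in I.
Proof. by rewrite baddxx ideal0. Qed.

Lemma congr_sym p q : badd p q \in I -> badd q p \in I.
Proof. by rewrite baddC. Qed.

Lemma congr_trans q p r : badd p q \in I -> badd q r \in I -> badd p r \in I.
Proof.
move=> pq qr; have -> : badd p r = badd (badd p q) (badd q r).
  by apply: beval_inj => x; rewrite !beval_add addbA addbK.
exact: ideal_add.
Qed.

Lemma congr_add a b c d :
  badd a c \in I -> badd b d \in I -> badd (badd a b) (badd c d) \in I.
Proof.
move=> ac bd; have -> : badd (badd a b) (badd c d) = badd (badd a c) (badd b d).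
  by apply: beval_inj => x; rewrite !beval_add addbACA.
exact: ideal_add.
Qed.

Lemma congr_mul a b c d :
  badd a c \in I -> badd b d \in I -> badd (bmul a b) (bmul c d) \in I.
Proof.
move=> ac bd.
have -> : badd (bmul a b) (bmul c d) = badd (bmul b (badd a c)) (bmul c (badd b d)).
  apply: beval_inj => x; rewrite !(beval_add, beval_mul).
  by case: (beval a x); case: (beval b x); case: (beval c x); case: (beval d x).
by apply: ideal_add; apply: ideal_mul.
Qed.

Lemma congr_bsubst a p :
  (forall i, badd (bvar i) (a i) \in I) -> badd p (bsubst a p) \in I.
Proof.
move=> var_a; rewrite -{1}(bsubst_var p) /bsubst.
elim: (enum p) => [|t l IH] /=; first exact: congr_refl.
apply: congr_add => //; elim: (enum t) => [|i r IHt] /=; first exact: congr_refl.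
exact: congr_mul.
Qed.

Lemma monomial_mul_mem t u : [set u] \in I -> u \subset t -> [set t] \in I.
Proof.
move=> uI ut; suff -> : [set t] = bmul [set t] [set u] by exact: ideal_mul.
apply: beval_inj => x; rewrite beval_mul !beval_monomial.
by apply/idP/andP => [tx | [] //]; rewrite tx (subset_trans ut tx).
Qed.

End Ideal.

Section Subring.
Variables (s : nat) (z : 'I_s -> 'I_n).

Lemma inBm0 : inBm z (bzero n).
Proof. by apply/forallP => t; rewrite inE. Qed.

Lemma inBm1 : inBm z (bone n).
Proof. by apply/forall_inP => t /set1P ->; apply/forallP => j; rewrite inE. Qed.

Lemma inBm_var i : (forall j, z j != i) -> inBm z (bvar i).
Proof.
by move=> zNi; apply/forall_inP => t /set1P ->; apply/forallP => j; rewrite inE.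
Qed.

Lemma inBm_add p q : inBm z p -> inBm z q -> inBm z (badd p q).
Proof.
move=> /forall_inP Hp /forall_inP Hq; apply/forall_inP => t.
by rewrite in_badd; case: (boolP (t \in p)) => /= [tp _ | _ tq]; [apply: Hp | apply: Hq].
Qed.

Lemma inBm_mul p q : inBm z p -> inBm z q -> inBm z (bmul p q).
Proof.
move=> /forall_inP Hp /forall_inP Hq; apply/forall_inP => _ /in_bmulP [a [b [ap bq ->]]].
have /forallP Ha := Hp a ap; have /forallP Hb := Hq b bq.
by apply/forallP => j; rewrite in_setU negb_or Ha Hb.
Qed.

Lemma inBm_bsubst a p : (forall i, inBm z (a i)) -> inBm z (bsubst a p).
Proof.
move=> Ba; rewrite /bsubst; elim: (enum p) => [|t l IH] /=; first exact: inBm0.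
apply: inBm_add => //; elim: (enum t) => [|i r IHt] /=; first exact: inBm1.
exact: inBm_mul.
Qed.

Lemma inBm_termN p t j : inBm z p -> t \in p -> z j \notin t.
Proof. by move=> /forall_inP /(_ t) Bp /Bp /forallP. Qed.

End Subring.

Lemma in_gen_mem S g : g \in S -> in_gen S g.
Proof. by move=> gS J _ /subsetP; apply. Qed.

Lemma LT_in_LTs le G g t : g \in G -> isLT le g t -> [set t] \in LTs le G.
Proof.
move=> gG gt; apply/imsetP; exists t => //.
by rewrite inE; apply/existsP; exists g; rewrite gG gt.
Qed.

(* The polynomials all of whose terms are multiples of a leading term of G
   form an ideal containing LT(G). *)
Lemma in_gen_LTs_monomial le G t : in_gen (LTs le G) [set t] ->
  exists g u, [/\ g \in G, isLT le g u & u \subset t].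
Proof.
pose divLT w := [exists g in G, exists u, isLT le g u && (u \subset w)].
pose J := [set p : bpoly n | [forall w in p, divLT w]].
have idealJ : is_ideal J.
  split; first by rewrite inE; apply/forall_inP => w; rewrite inE.
  - move=> p q; rewrite !inE => /forall_inP Hp /forall_inP Hq; apply/forall_inP => w.
    by rewrite in_badd; case: (boolP (w \in p)) => /= [wp _ | _ wq]; [apply: Hp | apply: Hq].
  - move=> p q; rewrite !inE => /forall_inP Hq.
    apply/forall_inP => _ /in_bmulP [a [b [_ bq ->]]].
    have /exists_inP [g gG /existsP [u /andP [gu ub]]] := Hq b bq.
    apply/exists_inP; exists g => //; apply/existsP; exists u.
    by rewrite gu (subset_trans ub (subsetUr _ _)).
have LTs_J : LTs le G \subset J.
  apply/subsetP => p /imsetP [u]; rewrite inE => /exists_inP [g gG gu] ->.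
  rewrite inE; apply/forall_inP => w /set1P ->.
  by apply/exists_inP; exists g => //; apply/existsP; exists u; rewrite gu subxx.
move=> /(_ J idealJ LTs_J); rewrite inE => /forall_inP /(_ t (set11 t)).
by case/exists_inP => g gG /existsP [u /andP [gu ut]]; exists g, u.
Qed.

Lemma ev_inj : injective (@ev n).
Proof.
move=> u v /ffunP Euv; apply/setP => i; move: (Euv i); rewrite !ffunE.
by case: (i \in u); case: (i \in v).
Qed.

Section TermOrdering.
Variable le : rel (expv n).
Hypothesis le_ord : is_term_ordering le.

Lemma isLT_exists g : g != bzero n -> exists t, isLT le g t.
Proof.
case: le_ord => -[le_refl _ le_trans le_total] _ g0.
pose geT u v := le (ev v) (ev u).
have geT_total : total geT by move=> u v; apply: le_total.
have geT_trans : transitive geT by move=> v u w uv vw; apply: le_trans vw uv.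
have mem_sorted u : (u \in sort geT (enum g)) = (u \in g) by rewrite mem_sort mem_enum.
case E: (sort geT (enum g)) mem_sorted => [|t rest] mem_sorted.
  by case/set0Pn: g0 => u; rewrite -mem_sorted.
have := sort_sorted geT_total (enum g); rewrite E /= => /(order_path_min geT_trans) tmax.
exists t; rewrite /isLT -mem_sorted mem_head; apply/forall_inP => u.
by rewrite -mem_sorted inE => /predU1P [-> | /(allP tmax)].
Qed.

Lemma isLT_set0 g : isLT le g set0 -> g = bone n.
Proof.
case: le_ord => -[_ le_anti _ _] [_ le0] /andP [g0 /forall_inP gmax].
apply/setP => u; rewrite inE; apply/idP/eqP => [ug | -> //].
apply: ev_inj; apply: le_anti; rewrite gmax //.
have -> : ev set0 = ev0 n by apply/ffunP => i; rewrite !ffunE inE.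
exact: le0.
Qed.

End TermOrdering.

End BooleanPolynomials.

Section ReducedGroebnerBasis.
Variables (n s : nat) (I G : {set bpoly n}) (z : 'I_s -> 'I_n) (sigma : rel (expv n)).
Hypotheses (oneNI : bone n \notin I) (sigma_ord : is_term_ordering sigma).
Hypothesis z_LT : forall k, inLT sigma I (bvar (z k)).
Hypothesis GB : is_reduced_GB sigma I G.

Lemma inLT_monomial k (u : bterm n) : z k \in u -> inLT sigma I [set u].
Proof.
move=> zku J idealJ LTs_J; apply: (monomial_mul_mem idealJ (z_LT k idealJ LTs_J)).
by rewrite sub1set.
Qed.

Lemma reduced_GB_LT_var k : exists2 g, g \in G & isLT sigma g [set z k].
Proof.
case: GB => -[GI _ LTG] _ _.
have [g [u [gG gu]]] := in_gen_LTs_monomial ((LTG _).2 (z_LT k)).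
rewrite subset1 => /orP [/eqP Eu | /eqP Eu]; subst u; first by exists g.
by move: oneNI; rewrite -(isLT_set0 sigma_ord gu) (subsetP GI).
Qed.

Lemma reduced_GB_tail (g : bpoly n) (t u : bterm n) k :
  g \in G -> isLT sigma g t -> u \in g -> u != t -> z k \notin u.
Proof.
case: GB => _ _ reduced gG gt ug ut; apply/negP => /inLT_monomial.
exact: reduced gG gt ug ut.
Qed.

Lemma reduced_GB_LT_var_uniq (g g' : bpoly n) (t : bterm n) k : g \in G -> g' \in G ->
  isLT sigma g t -> z k \in t -> isLT sigma g' [set z k] -> g = g'.
Proof.
case: GB => _ minimal _ gG g'G gt zkt g'zk.
apply/eqP; apply: contraT => gg'; exfalso.
apply: (minimal g t gG gt) => J idealJ LTs_J; apply: (monomial_mul_mem idealJ _).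
  apply: (subsetP LTs_J); apply: (LT_in_LTs _ g'zk).
  by rewrite !inE eq_sym gg' g'G.
by rewrite sub1set.
Qed.

Lemma reduced_GB_shape :
  exists (ht : 'I_s -> bpoly n) (Gs : {set bpoly n}),
    [/\ forall i, inBm z (ht i),
        forall g, g \in Gs -> inBm z g &
        G = [set badd (bvar (z i)) (ht i) | i : 'I_s] :|: Gs].
Proof.
have G0 : bzero n \notin G by case: GB => -[].
pose gz k := odflt (bzero n) [pick g in G | isLT sigma g [set z k]].
have gzP k : gz k \in G /\ isLT sigma (gz k) [set z k].
  rewrite /gz; case: pickP => [g /andP [] //| noLT].
  by have [g gG /(conj gG)/andP] := reduced_GB_LT_var k; rewrite noLT.
exists (fun k => badd (bvar (z k)) (gz k)), [set g in G | inBm z g]; split.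
- move=> k; have [gG gLT] := gzP k; apply/forall_inP => u.
  rewrite in_badd inE; case: eqP => [-> | /eqP uz] /=; first by case/andP: gLT => ->.
  by move=> ug; apply/forallP => j; apply: reduced_GB_tail gG gLT ug uz.
- by move=> g; rewrite inE => /andP [].
apply/setP => g; rewrite in_setU inE; apply/idP/idP => [gG | ]; last first.
  by case/orP => [/imsetP [k _ ->] | /andP [] //]; rewrite baddK; case: (gzP k).
have [t gt] : exists t, isLT sigma g t.
  by apply: (isLT_exists sigma_ord); apply: contraNneq G0 => <-.
case: (boolP [exists k, z k \in t]) => [/existsP [k zkt] | /existsPn tNz].
  apply/orP; left; apply/imsetP; exists k => //; rewrite baddK.
  by have [gkG gkLT] := gzP k; apply: reduced_GB_LT_var_uniq gG gkG gt zkt gkLT.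
rewrite gG /=; apply/orP; right; apply/forall_inP => u ug; apply/forallP => k.
by case: (eqVneq u t) => [-> | ut]; [apply: tNz | apply: reduced_GB_tail gG gt ug ut].
Qed.

End ReducedGroebnerBasis.

Section EliminationSubstitution.
Variables (n s : nat) (z : 'I_s -> 'I_n) (h : 'I_s -> bpoly n).
Hypothesis h_Bm : forall j, inBm z (h j).

Lemma inBm_Phi_images i : inBm z (Phi_images z h i).
Proof.
rewrite /Phi_images; case: pickP => [j _ | zNi]; first exact: h_Bm.
by apply: inBm_var => j; rewrite zNi.
Qed.

Variable I : {set bpoly n}.
Hypotheses (idealI : is_ideal I) (z_h_congr : forall j, badd (bvar (z j)) (h j) \in I).

Lemma bsubst_Phi_images_congr p : badd p (bsubst (Phi_images z h) p) \in I.
Proof.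
apply: congr_bsubst => // i; rewrite /Phi_images.
by case: pickP => [j /eqP <- | _]; [apply: z_h_congr | apply: congr_refl].
Qed.

Lemma bsubst_Phi_images_congrE p q :
  (badd (bsubst (Phi_images z h) p) (bsubst (Phi_images z h) q) \in I) =
  (badd p q \in I).
Proof.
have Phi_p := bsubst_Phi_images_congr p; have Phi_q := bsubst_Phi_images_congr q.
apply/idP/idP => [Phi_pq | pq].
  exact: (congr_trans idealI Phi_p (congr_trans idealI Phi_pq (congr_sym Phi_q))).
exact: (congr_trans idealI (congr_sym Phi_p) (congr_trans idealI pq Phi_q)).
Qed.

End EliminationSubstitution.

Lemma isLT_elim_var (n s : nat) (z : 'I_s -> 'I_n) (tau : rel (expv n)) j q :
  is_elim_ordering z tau -> inBm z q -> isLT tau (badd (bvar (z j)) q) [set z j].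
Proof.
case=> [[[tau_refl _ _ _] _] elim] Bq.
have zjNq : [set z j] \notin q by apply/negP => /(inBm_termN j Bq); rewrite inE eqxx.
rewrite /isLT in_badd inE eqxx (negbTE zjNq); apply/forall_inP => u.
rewrite in_badd inE; case: eqP => [-> _ | _ /= uq]; first exact: tau_refl.
have zj_pos : exists k, (0 < ev [set z j] (z k))%N by exists j; rewrite ffunE inE eqxx.
have u_Bm k : ev u (z k) = 0%N by rewrite ffunE (negbTE (inBm_termN k Bq uq)).
by case/andP: (elim _ _ zj_pos u_Bm).
Qed.

Theorem proposition6p2 (n s : nat) (I : {set bpoly n}) (z : 'I_s -> 'I_n)
  (sigma : rel (expv n)) (f h : 'I_s -> bpoly n) :
  proper_ideal I ->
  injective z ->
  is_term_ordering sigma ->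
  coh_Z_sep sigma I z f ->
  (forall i, f i = badd (bvar (z i)) (h i)) ->
  (forall i, inBm z (h i)) ->
  let Phi := bsubst (Phi_images z h) in
  (* (a) *)
  (forall G : {set bpoly n}, is_reduced_GB sigma I G ->
     exists (ht : 'I_s -> bpoly n) (Gs : {set bpoly n}),
       [/\ forall i, inBm z (ht i),
           forall g, g \in Gs -> inBm z g &
           G = [set badd (bvar (z i)) (ht i) | i : 'I_s] :|: Gs]) /\
  (* (b) Phi is a well-defined F_2-algebra isomorphism
         B_n / I -> B_m / (I cap B_m) *)
  ((forall p, inBm z (Phi p)) /\
   (forall p q, Phi (badd p q) = badd (Phi p) (Phi q)) /\
   (forall p q, Phi (bmul p q) = bmul (Phi p) (Phi q)) /\
   Phi (bone n) = bone n /\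
   (forall p q, badd p q \in I -> badd (Phi p) (Phi q) \in I) /\
   (forall p q, badd (Phi p) (Phi q) \in I -> badd p q \in I) /\
   (forall b, inBm z b -> exists p, badd (Phi p) b \in I)) /\
  (* (c) *)
  (forall tau : rel (expv n), is_elim_ordering z tau ->
     forall j, inLT tau I (bvar (z j))).
Proof.
move=> [idealI oneNI] _ sigma_ord [fI fLT _] f_def h_Bm Phi.
have z_h_congr j : badd (bvar (z j)) (h j) \in I by rewrite -f_def.
have z_LT j : inLT sigma I (bvar (z j)) := in_gen_mem (LT_in_LTs (fI j) (fLT j)).
have Phi_congr := bsubst_Phi_images_congrE idealI z_h_congr.
split; [|split].
- by move=> G; apply: reduced_GB_shape oneNI sigma_ord z_LT.
- do 6?split.
  + by move=> p; apply: inBm_bsubst; apply: inBm_Phi_images h_Bm.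
  + exact: bsubst_add.
  + exact: bsubst_mul.
  + exact: bsubst_one.
  + by move=> p q; rewrite Phi_congr.
  + by move=> p q; rewrite Phi_congr.
  + move=> b _; exists b; apply: congr_sym.
    exact: bsubst_Phi_images_congr idealI z_h_congr _.
- move=> tau tau_elim j; apply: in_gen_mem; apply: (LT_in_LTs (fI j)).
  by rewrite f_def; apply: isLT_elim_var.
Qed.
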